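(* Let $n\ge3$, $0\le\alpha\le1$ and $m:=\lfloor n^\alpha\rfloor$. Then \[ \mathbf E\bigl(\hat L_n^{\alpha,1}\bigr)=2\,\frac{n-m}{n-1} \] and \[ \mathbf{Var}\bigl(\hat L_n^{\alpha,1}\bigr)=\frac{8(h_{n-1}-h_{m-1})(n+2m-2)}{(n-1)(n-2)}-\frac{4(n-m)(4n+m-5)}{(n-1)^2(n-2)}. \] In particular (case $\alpha=0$), $\mathbf E(L_n)=2$ and $\mathbf{Var}(L_n)=\frac{8nh_n-16n+8}{(n-1)(n-2)}$.
   Context: Kingman's $n$-coalescent ($n\ge 2$) consists of coalescent times $T_1>T_2>\cdots>T_n=0$ such that $\binom{k}{2}(T_{k-1}-T_k)$, $k=2,\dots,n$, are independent exponential random variables with mean $1$, together with an independent sequence of partitions $\pi_1=\{\{1,\dots,n\}\},\pi_2,\dots,\pi_n=\{\{1\},\dots,\{n\}\}$ of $\{1,\dots,n\}$, where $\pi_k$ has $k$ blocks and $\pi_{k-1}$ is obtained from $\pi_k$ by merging two blocks of $\pi_k$ chosen uniformly at random (independently of the past). For a leaf $i$ let $\rho(i):=\max\{k\ge1:\{i\}\notin\pi_k\}$, and $L_n:=\sum_{i=1}^nT_{\rho(i)}$. For $0\le\alpha<\beta\le1$ define $\hat L_n^{\alpha,\beta}:=\sum_{i=1}^n\bigl(T_{\rho(i)}\wedge T_{\lfloor n^\alpha\rfloor}-T_{\rho(i)}\wedge T_{\lfloor n^\beta\rfloor}\bigr)$ (the portion of the external length between levels $\lfloor n^\alpha\rfloor$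 and $\lfloor n^\beta\rfloor$); note $\hat L_n^{0,1}=L_n$. Here $h_j:=1+\frac12+\cdots+\frac1j$ is the $j$-th harmonic number, with $h_0:=0$. *)

From Stdlib Require Import Reals Lra Lia List.
Import ListNotations.

Definition partition := list (list nat).

(** All index pairs (i,j) with i < j < k: the unordered pairs of blocks. *)
Definition pairs (k : nat) : list (nat * nat) :=
  flat_map (fun j => map (fun i => (i, j)) (seq 0 j)) (seq 0 k).

Definition merge (p : partition) (i j : nat) : partition :=
  (nth i p nil ++ nth j p nil)
    :: map snd (filter (fun q => negb (Nat.eqb (fst q) i || Nat.eqb (fst q) j))
                       (combine (seq 0 (length p)) p)).

Definition singleton_in (i : nat) (p : partition) : bool :=
  existsb (fun b => match b with [x] => Nat.eqb x i | _ => false end) p.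

(** rho(i) = max { k >= 1 : {i} not in pi_k }, where the history H is the
    list [pi_1; pi_2; ...; pi_n], i.e. pi_k = nth (k-1) H. *)
Definition rho (n : nat) (H : list partition) (i : nat) : nat :=
  fold_left (fun acc k => if singleton_in i (nth (k - 1) H nil) then acc else k)
            (seq 1 n) 0%nat.

Open Scope R_scope.

(** Expectation over the random partition chain: starting from
    pi_n = {{1},...,{n}}, at each step two blocks are merged, the pair being
    chosen uniformly among the C(k,2) pairs of blocks.  [F] is evaluated on the
    whole history [pi_1; ...; pi_n] and averaged with the exact probabilities. *)
Fixpoint chain_avg (fuel : nat) (p : partition) (hist : list partition)
         (F : list partition -> R) : R :=
  match fuel with
  | O => F (p :: hist)
  | S f =>
      fold_right Rplus 0
        (map (fun ij => chain_avg f (merge p (fst ij) (snd ij)) (p :: hist) F)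
             (pairs (length p)))
      / INR (length (pairs (length p)))
  end.

Definition coalescent_avg (n : nat) (F : list partition -> R) : R :=
  chain_avg (n - 1) (map (fun i => [i]) (seq 1 n)) nil F.

(** [es] = [e_2; e_3; ...; e_n], independent Exp(1) variables with
    C(k,2) (T_{k-1} - T_k) = e_k, T_n = 0; hence
    T_k = sum_{j=k+1}^n e_j / C(j,2). *)
Definition T (n : nat) (es : list R) (k : nat) : R :=
  fold_right Rplus 0
    (map (fun j => nth (j - 2) es 0 / (INR j * INR (j - 1) / 2))
         (seq (k + 1) (n - k))).

Definition nfloor (x : R) : nat := Z.to_nat (up x - 1).

Definition Lext (n : nat) (H : list partition) (es : list R) : R :=
  fold_right Rplus 0 (map (fun i => T n es (rho n H i)) (seq 1 n)).

Definition Lhat (n : nat) (alpha beta : R) (H : list partition) (es : list R) : R :=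
  let ma := nfloor (Rpower (INR n) alpha) in
  let mb := nfloor (Rpower (INR n) beta) in
  fold_right Rplus 0
    (map (fun i => Rmin (T n es (rho n H i)) (T n es ma)
                   - Rmin (T n es (rho n H i)) (T n es mb))
         (seq 1 n)).

Fixpoint harm (j : nat) : R :=
  match j with
  | O => 0
  | S j' => harm j' + / INR (S j')
  end.

Definition exp_integral (h : R -> R) (l : R) : Prop :=
  forall eps, 0 < eps ->
    exists M0, forall M, M0 <= M ->
      exists pr : Riemann_integrable (fun x => exp (- x) * h x) 0 M,
        Rabs (RiemannInt pr - l) < eps.

(** [exp_expect d g l] : E[g(X_1,...,X_d)] = l for X_1..X_d i.i.d. Exp(1),
    computed as an iterated integral (Fubini/Tonelli). *)
Fixpoint exp_expect (d : nat) (g : list R -> R) (l : R) : Prop :=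
  match d with
  | O => g nil = l
  | S d' => exists inner : R -> R,
      (forall x, 0 <= x -> exp_expect d' (fun xs => g (x :: xs)) (inner x))
      /\ exp_integral inner l
  end.

(* Given the partition chain, [Lhat] is [sum_(k > m) (T_(k-1) - T_k) Y_k], where [Y_k] is the
   number of singleton blocks of [pi_k]. As [T_(k-1) - T_k = e_k / C(k,2)] with independent
   exponential [e_k], the conditional mean and mean square are linear and quadratic forms in the
   [e_k]; integrating with [E e = 1] and [E e^2 = 2] reduces everything to the first two moments
   of the [Y_k]. Merging two uniformly chosen blocks of [pi_k] gives
     E (Y_(k-1) | pi_k)   = (k-2)/k Y_k,
     E (Y_(k-1)^2 | pi_k) = (k-2)(k-3)/(k(k-1)) Y_k^2 + 2(k-2)/(k(k-1)) Y_k,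
   so averaging backwards along the chain from [Y_n = n] yields linear recursions for the
   coefficients of [Y_k] and [Y_k^2], which are solved in closed form by induction on [k]. *)

From Pilot Require Import Defs.
From Stdlib Require Import Reals List.
From Stdlib Require Import Lra Lia Psatz Permutation Bool ZArith.
Import ListNotations.
Open Scope R_scope.

Fixpoint rsum (f : nat -> R) (d : nat) : R :=
  match d with O => 0 | S d' => rsum f d' + f d' end.

Lemma rsum_ext f g d : (forall i, (i < d)%nat -> f i = g i) -> rsum f d = rsum g d.
Proof. induction d; intros H; simpl; auto. rewrite IHd, H; auto. Qed.

Lemma rsum_add f g d : rsum (fun i => f i + g i) d = rsum f d + rsum g d.
Proof. induction d; simpl; [ring | rewrite IHd; ring]. Qed.

Lemma rsum_scal r f d : rsum (fun i => r * f i) d = r * rsum f d.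
Proof. induction d; simpl; [ring | rewrite IHd; ring]. Qed.

Lemma rsum_const c d : rsum (fun _ => c) d = c * INR d.
Proof. induction d; cbn [rsum]; [simpl; ring | rewrite IHd, S_INR; ring]. Qed.

Lemma rsum_zero d : rsum (fun _ => 0) d = 0.
Proof. rewrite rsum_const; ring. Qed.

Lemma rsum_Sl f d : rsum f (S d) = f 0%nat + rsum (fun i => f (S i)) d.
Proof. induction d; simpl in *; [ring | rewrite IHd; ring]. Qed.

Lemma rsum2_Sl (F : nat -> nat -> R) d :
  rsum (fun i => rsum (fun j => F i j) (S d)) (S d) =
  F 0%nat 0%nat + rsum (fun j => F 0%nat (S j)) d + rsum (fun i => F (S i) 0%nat) d
  + rsum (fun i => rsum (fun j => F (S i) (S j)) d) d.
Proof.
  rewrite rsum_Sl, rsum_Sl.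
  rewrite (rsum_ext (fun i => rsum (fun j => F (S i) j) (S d))
             (fun i => F (S i) 0%nat + rsum (fun j => F (S i) (S j)) d))
    by (intros; apply rsum_Sl).
  rewrite rsum_add; ring.
Qed.

Lemma rsum_sqr f d : rsum f d ^ 2 = rsum (fun i => rsum (fun j => f i * f j) d) d.
Proof.
  rewrite (rsum_ext (fun i => rsum (fun j => f i * f j) d) (fun i => rsum f d * f i))
    by (intros; rewrite rsum_scal; ring).
  rewrite rsum_scal; ring.
Qed.

(** * Expectations of quadratic polynomials in independent exponential variables *)

Lemma exp_integral_quadratic_derive a b c x :
  derivable_pt_lim (fun x => - exp (- x) * (a + b + 2 * c + (b + 2 * c) * x + c * x ^ 2)) x
    (exp (- x) * (a + b * x + c * x ^ 2)).
Proof.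
  assert (Dexp : derivable_pt_lim (fun x => - exp (- x)) x (exp (- x))).
  { pose proof (derivable_pt_lim_opp _ _ _ (derivable_pt_lim_comp (fun x => - x) exp x _ _
      (derivable_pt_lim_opp _ _ _ (derivable_pt_lim_id x)) (derivable_pt_lim_exp (- x)))) as D.
    unfold comp, opp_fct in D. now replace (exp (- x)) with (- (exp (- x) * -1)) by ring. }
  assert (Dpoly : derivable_pt_lim (fun x => a + b + 2 * c + (b + 2 * c) * x + c * x ^ 2) x
                    (0 + (b + 2 * c) * 1 + c * (INR 2 * x ^ (2 - 1)))).
  { apply derivable_pt_lim_plus; [apply derivable_pt_lim_plus|].
    - apply derivable_pt_lim_const.
    - apply derivable_pt_lim_scal, derivable_pt_lim_id.
    - apply derivable_pt_lim_scal, derivable_pt_lim_pow. }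
  pose proof (derivable_pt_lim_mult _ _ _ _ _ Dexp Dpoly) as D. unfold mult_fct in D.
  now replace (exp (- x) * (a + b * x + c * x ^ 2)) with
    (exp (- x) * (a + b + 2 * c + (b + 2 * c) * x + c * x ^ 2) +
     - exp (- x) * (0 + (b + 2 * c) * 1 + c * (INR 2 * x ^ (2 - 1)))) by (simpl; ring).
Qed.

Lemma RiemannInt_antiderivative (f F : R -> R) (a b : R) (Hab : a <= b)
  (pr : Riemann_integrable f a b) :
  (forall x, a <= x <= b -> continuity_pt f x) -> antiderivative f F a b ->
  RiemannInt pr = F b - F a.
Proof.
  intros Hc HF. rewrite (RiemannInt_P20 Hab (FTC_P1 Hab Hc) pr).
  destruct (antiderivative_Ucte f _ _ _ _ (RiemannInt_P29 Hab Hc) HF) as [C HC].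
  rewrite !HC by lra; ring.
Qed.

Lemma pow3_third_le_exp x : 0 <= x -> (x / 3) ^ 3 <= exp x.
Proof.
  intros Hx.
  replace (exp x) with (exp (x / 3) ^ 3)
    by (simpl; rewrite Rmult_1_r, <- !exp_plus; f_equal; field).
  apply pow_incr. pose proof (exp_ineq1_le (x / 3)). lra.
Qed.

Lemma exp_integral_quadratic a b c :
  exp_integral (fun x => a + b * x + c * x ^ 2) (a + b + 2 * c).
Proof.
  intros eps Heps.
  set (K := Rabs (a + b + 2 * c) + Rabs (b + 2 * c) + Rabs c).
  pose proof (Rabs_pos (a + b + 2 * c)); pose proof (Rabs_pos (b + 2 * c)); pose proof (Rabs_pos c).
  assert (HK : 0 <= K) by (unfold K; lra).
  assert (HKe : 0 <= 27 * K / eps)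
    by (apply Rmult_le_pos; [lra | apply Rlt_le, Rinv_0_lt_compat; lra]).
  exists (1 + 27 * K / eps). intros M HM.
  assert (HM0 : 0 <= M) by lra.
  pose proof (fun x (_ : 0 <= x <= M) =>
    (ltac:(reg) : continuity_pt (fun x => exp (- x) * (a + b * x + c * x ^ 2)) x)) as Hcont.
  exists (continuity_implies_RiemannInt HM0 Hcont).
  rewrite (RiemannInt_antiderivative _
    (fun x => - exp (- x) * (a + b + 2 * c + (b + 2 * c) * x + c * x ^ 2)) 0 M HM0 _ Hcont)
    by (split; [intros x _; exists (exist _ _ (exp_integral_quadratic_derive a b c x)) | ]; auto).
  rewrite Ropp_0, exp_0.
  set (q := a + b + 2 * c + (b + 2 * c) * M + c * M ^ 2).
  match goal with |- Rabs ?X < _ => replace X with (- (exp (- M) * q)) by (simpl; ring) end.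
  rewrite Rabs_Ropp, Rabs_mult, (Rabs_right (exp (- M))) by (apply Rle_ge, Rlt_le, exp_pos).
  (* |q| <= K M^2 and exp(-M) (M/3)^3 <= 1, so exp(-M) |q| <= 27 K / M < eps *)
  assert (Hq : Rabs q <= K * M ^ 2).
  { unfold q, K. eapply Rle_trans; [apply Rabs_triang|].
    eapply Rle_trans; [apply Rplus_le_compat_r, Rabs_triang|].
    rewrite !Rabs_mult, (Rabs_right M), (Rabs_right (M ^ 2))
      by (apply Rle_ge; try apply pow_le; lra).
    assert (M <= M * M) by nra. assert (1 <= M * M) by nra.
    simpl; rewrite !Rmult_1_r; nra. }
  assert (H3 : exp (- M) * (M / 3) ^ 3 <= 1).
  { replace 1 with (exp (- M) * exp M) by (rewrite <- exp_plus, Rplus_opp_l; apply exp_0).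
    apply Rmult_le_compat_l; [apply Rlt_le, exp_pos | now apply pow3_third_le_exp]. }
  assert (H27 : 27 * K < eps * M).
  { assert (HM' : 27 * K / eps < M) by lra.
    apply (Rmult_lt_compat_l eps) in HM'; [|lra].
    unfold Rdiv in HM'. now replace (eps * (27 * K * / eps)) with (27 * K) in HM' by (field; lra). }
  pose proof (exp_pos (- M)).
  assert (exp (- M) * Rabs q <= exp (- M) * (K * M ^ 2)) by (apply Rmult_le_compat_l; lra).
  assert (exp (- M) * (K * M ^ 2) * M <= 27 * K).
  { replace (exp (- M) * (K * M ^ 2) * M) with (27 * K * (exp (- M) * (M / 3) ^ 3))
      by (simpl; field).
    nra. }
  nra.
Qed.

Definition quad_form d c (b : nat -> R) (A : nat -> nat -> R) (xs : list R) : R :=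
  c + rsum (fun i => b i * nth i xs 0) d
    + rsum (fun i => rsum (fun j => A i j * nth i xs 0 * nth j xs 0) d) d.

(* The mean of [quad_form d c b A] at i.i.d. Exp(1) variables: E X_i = 1 and E X_i^2 = 2. *)
Definition quad_form_mean d c (b : nat -> R) (A : nat -> nat -> R) : R :=
  c + rsum b d + rsum (fun i => rsum (fun j => A i j) d) d + rsum (fun i => A i i) d.

Lemma exp_expect_quad_form d : forall c b A (g : list R -> R),
  (forall xs, length xs = d -> Forall (Rle 0) xs -> g xs = quad_form d c b A xs) ->
  exp_expect d g (quad_form_mean d c b A).
Proof.
  induction d; intros c b A g Hg.
  { simpl. rewrite Hg by auto. unfold quad_form, quad_form_mean. simpl. ring. }
  (* Integrating out the first variable x leaves a quadratic form in the others whose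
     mean is a quadratic polynomial in x. *)
  set (a0 := c + rsum (fun i => b (S i)) d + rsum (fun i => rsum (fun j => A (S i) (S j)) d) d
             + rsum (fun i => A (S i) (S i)) d).
  set (a1 := b 0%nat + rsum (fun i => A 0%nat (S i) + A (S i) 0%nat) d).
  set (a2 := A 0%nat 0%nat).
  exists (fun x => a0 + a1 * x + a2 * x ^ 2). split.
  - intros x Hx.
    set (c' := c + b 0%nat * x + A 0%nat 0%nat * x ^ 2).
    set (b' := fun i => b (S i) + (A 0%nat (S i) + A (S i) 0%nat) * x).
    set (A' := fun i j => A (S i) (S j)).
    replace (a0 + a1 * x + a2 * x ^ 2) with (quad_form_mean d c' b' A').
    2:{ unfold quad_form_mean, a0, a1, a2, c', b', A'.
        rewrite rsum_add, (rsum_ext (fun i => (A 0%nat (S i) + A (S i) 0%nat) * x)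
                                     (fun i => x * (A 0%nat (S i) + A (S i) 0%nat)))
          by (intros; ring).
        rewrite rsum_scal. ring. }
    apply IHd. intros xs Hl Hf. rewrite Hg by (simpl; auto).
    unfold quad_form. rewrite rsum_Sl, rsum2_Sl. simpl nth. unfold c', b', A'.
    rewrite (rsum_ext (fun i => (b (S i) + (A 0%nat (S i) + A (S i) 0%nat) * x) * nth i xs 0)
               (fun i => b (S i) * nth i xs 0 + (x * (A 0%nat (S i) * nth i xs 0)
                                                + x * (A (S i) 0%nat * nth i xs 0))))
      by (intros; ring).
    rewrite (rsum_ext (fun j => A 0%nat (S j) * x * nth j xs 0)
               (fun j => x * (A 0%nat (S j) * nth j xs 0))) by (intros; ring).
    rewrite (rsum_ext (fun i => A (S i) 0%nat * nth i xs 0 * x)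
               (fun i => x * (A (S i) 0%nat * nth i xs 0))) by (intros; ring).
    rewrite !rsum_add, !rsum_scal. ring.
  - replace (quad_form_mean (S d) c b A) with (a0 + a1 + 2 * a2).
    + apply exp_integral_quadratic.
    + unfold quad_form_mean, a0, a1, a2. rewrite rsum2_Sl, !rsum_Sl, rsum_add. ring.
Qed.

Lemma quad_form_linear d b xs :
  quad_form d 0 b (fun _ _ => 0) xs = rsum (fun i => nth i xs 0 * b i) d.
Proof.
  unfold quad_form.
  rewrite (rsum_ext (fun i => rsum (fun j => 0 * nth i xs 0 * nth j xs 0) d) (fun _ => 0))
    by (intros; rewrite (rsum_ext _ (fun _ => 0)) by (intros; ring); apply rsum_zero).
  rewrite rsum_zero, (rsum_ext _ (fun i => nth i xs 0 * b i)) by (intros; ring). ring.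
Qed.

Lemma quad_form_mean_linear d b : quad_form_mean d 0 b (fun _ _ => 0) = rsum b d.
Proof.
  unfold quad_form_mean.
  rewrite (rsum_ext (fun i => rsum (fun _ => 0) d) (fun _ => 0)) by (intros; apply rsum_zero).
  rewrite !rsum_zero. ring.
Qed.

Lemma quad_form_sqr d mu b xs :
  quad_form d (mu ^ 2) (fun i => -2 * mu * b i) (fun i j => b i * b j) xs =
  (rsum (fun i => nth i xs 0 * b i) d - mu) ^ 2.
Proof.
  unfold quad_form.
  rewrite (rsum_ext (fun i => -2 * mu * b i * nth i xs 0) (fun i => (-2 * mu) * (nth i xs 0 * b i)))
    by (intros; ring).
  rewrite (rsum_ext (fun i => rsum (fun j => b i * b j * nth i xs 0 * nth j xs 0) d)
             (fun i => rsum (fun j => (nth i xs 0 * b i) * (nth j xs 0 * b j)) d))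
    by (intros; apply rsum_ext; intros; ring).
  rewrite rsum_scal, <- rsum_sqr. ring.
Qed.

Lemma quad_form_mean_sqr d mu b :
  quad_form_mean d (mu ^ 2) (fun i => -2 * mu * b i) (fun i j => b i * b j) =
  (rsum b d - mu) ^ 2 + rsum (fun i => b i ^ 2) d.
Proof.
  unfold quad_form_mean. rewrite rsum_scal, <- rsum_sqr.
  rewrite (rsum_ext (fun i => b i * b i) (fun i => b i ^ 2)) by (intros; ring). ring.
Qed.

Definition lsum (l : list R) : R := fold_right Rplus 0 l.

Lemma lsum_app l1 l2 : lsum (l1 ++ l2) = lsum l1 + lsum l2.
Proof. induction l1; simpl; [ring | unfold lsum in *; simpl; rewrite IHl1; ring]. Qed.

Lemma lsum_perm l1 l2 : Permutation l1 l2 -> lsum l1 = lsum l2.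
Proof. induction 1; unfold lsum in *; simpl; lra. Qed.

Lemma lsum_map_ext {T} (f g : T -> R) l :
  (forall x, In x l -> f x = g x) -> lsum (map f l) = lsum (map g l).
Proof. intros H. f_equal. now apply map_ext_in. Qed.

Lemma lsum_map_lin {T} (f g : T -> R) r s l :
  lsum (map (fun x => r * f x + s * g x) l) = r * lsum (map f l) + s * lsum (map g l).
Proof. induction l; unfold lsum in *; simpl; [ring | rewrite IHl; ring]. Qed.

Lemma lsum_map_scal {T} r (f : T -> R) l : lsum (map (fun x => r * f x) l) = r * lsum (map f l).
Proof. induction l; unfold lsum in *; simpl; [ring | rewrite IHl; ring]. Qed.

Lemma lsum_map_const {T} (c : R) (l : list T) : lsum (map (fun _ => c) l) = c * INR (length l).
Proof.
  induction l; unfold lsum in *; simpl length; [simpl; ring|].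
  rewrite S_INR; simpl; rewrite IHl; ring.
Qed.

Lemma lsum_map_zero {T} (l : list T) : lsum (map (fun _ => 0) l) = 0.
Proof. rewrite lsum_map_const; ring. Qed.

Lemma lsum_map_le {T} (f g : T -> R) l :
  (forall x, In x l -> f x <= g x) -> lsum (map f l) <= lsum (map g l).
Proof.
  induction l; intros H; unfold lsum in *; simpl; [lra|].
  apply Rplus_le_compat; [apply H; simpl | apply IHl; intros; apply H; simpl]; auto.
Qed.

Lemma lsum_map_nonneg {T} (f : T -> R) l : (forall x, In x l -> 0 <= f x) -> 0 <= lsum (map f l).
Proof. intros H. rewrite <- (lsum_map_zero l). now apply lsum_map_le. Qed.

Lemma lsum_map_swap {T U} (F : T -> U -> R) l1 l2 :
  lsum (map (fun x => lsum (map (fun y => F x y) l2)) l1) =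
  lsum (map (fun y => lsum (map (fun x => F x y) l1)) l2).
Proof.
  induction l1 as [|a l1 IH]; simpl; [now rewrite lsum_map_zero|].
  change (lsum (map (fun y => F a y) l2) + lsum (map (fun x => lsum (map (fun y => F x y) l2)) l1) =
          lsum (map (fun y => F a y + lsum (map (fun x => F x y) l1)) l2)).
  rewrite IH, <- (Rmult_1_l (lsum (map (fun y => F a y) l2))),
    <- (Rmult_1_l (lsum (map (fun y => lsum _) l2))), <- lsum_map_lin.
  apply lsum_map_ext; intros; ring.
Qed.

Lemma lsum_map_seq f s k : lsum (map f (seq s k)) = rsum (fun i => f (s + i)%nat) k.
Proof.
  revert s; induction k; intros s; auto. simpl seq. rewrite rsum_Sl.
  change (f s + lsum (map f (seq (S s) k)) = f (s + 0)%nat + rsum (fun i => f (s + S i)%nat) k).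
  rewrite IHk, Nat.add_0_r. f_equal. apply rsum_ext. intros. f_equal. lia.
Qed.

Lemma lsum_map_nth {T} (f : T -> R) (l : list T) d :
  lsum (map f l) = rsum (fun a => f (nth a l d)) (length l).
Proof.
  induction l; auto. simpl length. rewrite rsum_Sl. simpl. unfold lsum in *; simpl. now rewrite IHl.
Qed.

Lemma pairs_S k : pairs (S k) = pairs k ++ map (fun i => (i, k)) (seq 0 k).
Proof. unfold pairs. rewrite seq_S, flat_map_app. simpl. now rewrite app_nil_r. Qed.

Lemma In_pairs k ij : In ij (pairs k) -> (fst ij < snd ij < k)%nat.
Proof.
  unfold pairs. rewrite in_flat_map. intros [j [Hj Hi]]. rewrite in_map_iff in Hi.
  destruct Hi as [i [<- Hi]]. apply in_seq in Hj. apply in_seq in Hi. simpl. lia.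
Qed.

Lemma lsum_pairs (g : nat * nat -> R) k :
  lsum (map g (pairs k)) = rsum (fun b => rsum (fun a => g (a, b)) b) k.
Proof.
  induction k; auto. now rewrite pairs_S, map_app, lsum_app, IHk, map_map, lsum_map_seq.
Qed.

Lemma length_pairs k : INR (length (pairs k)) = INR k * (INR k - 1) / 2.
Proof.
  induction k; [simpl; field|].
  rewrite pairs_S, length_app, plus_INR, IHk, length_map, length_seq, S_INR. field.
Qed.

Lemma rsum_pairs_add (u : nat -> R) k :
  rsum (fun b => rsum (fun a => u a + u b) b) k = (INR k - 1) * rsum u k.
Proof.
  induction k; [simpl; ring|].
  cbn [rsum]. rewrite IHk, rsum_add, rsum_const, S_INR. ring.
Qed.

Lemma rsum_pairs_add_sqr (u : nat -> R) k :
  rsum (fun b => rsum (fun a => (u a + u b) ^ 2) b) k =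
  (INR k - 2) * rsum (fun a => u a ^ 2) k + rsum u k ^ 2.
Proof.
  induction k; [simpl; ring|].
  cbn [rsum]. rewrite IHk.
  rewrite (rsum_ext (fun a => (u a + u k) ^ 2) (fun a => (u a ^ 2 + (2 * u k) * u a) + u k ^ 2))
    by (intros; ring).
  rewrite !rsum_add, rsum_scal, rsum_const, S_INR. ring.
Qed.

(** * Merging blocks and counting singletons *)

Definition unmerged (p : Defs.partition) (a b : nat) : Defs.partition :=
  map snd (filter (fun q => negb (Nat.eqb (fst q) a || Nat.eqb (fst q) b))
                  (combine (seq 0 (length p)) p)).

Lemma merge_unmerged p a b : merge p a b = (nth a p [] ++ nth b p []) :: unmerged p a b.
Proof. reflexivity. Qed.

Lemma Permutation_filter_negb {T} (f : T -> bool) l :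
  Permutation l (filter f l ++ filter (fun x => negb (f x)) l).
Proof.
  induction l; simpl; auto. destruct (f a); simpl; [constructor | apply Permutation_cons_app]; auto.
Qed.

Lemma Permutation_concat {T} (l1 l2 : list (list T)) :
  Permutation l1 l2 -> Permutation (concat l1) (concat l2).
Proof.
  intros H. rewrite <- (map_id l1), <- (map_id l2), <- !flat_map_concat_map.
  now apply Permutation_flat_map.
Qed.

Lemma map_snd_combine_seq {T} (l : list T) s : map snd (combine (seq s (length l)) l) = l.
Proof. revert s; induction l; intros s; simpl; f_equal; auto. Qed.

Lemma map_snd_filter_combine_seq {T} (P : nat -> bool) (l : list T) s d :
  map snd (filter (fun q => P (fst q)) (combine (seq s (length l)) l)) =
  map (fun k => nth (k - s) l d) (filter P (seq s (length l))).
Proof.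
  revert s; induction l; intros s; simpl; auto.
  assert (Hshift : map (fun k => nth (k - S s) l d) (filter P (seq (S s) (length l))) =
                   map (fun k => nth (k - s) (a :: l) d) (filter P (seq (S s) (length l)))).
  { apply map_ext_in. intros k Hk. apply filter_In in Hk. destruct Hk as [Hk _].
    apply in_seq in Hk. now replace (k - s)%nat with (S (k - S s)) by lia. }
  destruct (P s); simpl; rewrite IHl, Hshift; [now rewrite Nat.sub_diag | auto].
Qed.

Lemma filter_seq_pair a b len : (a < b < len)%nat ->
  filter (fun k => Nat.eqb k a || Nat.eqb k b) (seq 0 len) = [a; b].
Proof.
  intros H.
  assert (Hs : seq 0 len = seq 0 a ++ a :: seq (S a) (b - S a) ++ b :: seq (S b) (len - S b)).
  { replace len with (a + S ((b - S a) + S (len - S b)))%nat at 1 by lia.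
    rewrite seq_app. simpl. do 2 f_equal. rewrite seq_app. f_equal.
    now replace (S a + (b - S a))%nat with b by lia. }
  assert (Hnone : forall s k, (forall x, In x (seq s k) -> x <> a /\ x <> b) ->
             filter (fun k => Nat.eqb k a || Nat.eqb k b) (seq s k) = []).
  { intros s k Hx. rewrite <- (filter_false (seq s k)). apply filter_ext_in.
    intros x Hin. destruct (Hx x Hin). apply orb_false_iff. split; now apply Nat.eqb_neq. }
  rewrite Hs, filter_app. simpl. rewrite filter_app. simpl.
  rewrite !Hnone by (intros x Hx; apply in_seq in Hx; lia).
  rewrite !Nat.eqb_refl, orb_true_r. simpl.
  now replace (Nat.eqb b a) with false by (symmetry; apply Nat.eqb_neq; lia).
Qed.

Lemma Permutation_merge p a b : (a < b < length p)%nat ->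
  Permutation p (nth a p [] :: nth b p [] :: unmerged p a b).
Proof.
  intros H.
  pose proof (Permutation_map snd (Permutation_filter_negb
    (fun q => Nat.eqb (fst q) a || Nat.eqb (fst q) b) (combine (seq 0 (length p)) p))) as HP.
  rewrite map_snd_combine_seq, map_app,
    (map_snd_filter_combine_seq (fun k => Nat.eqb k a || Nat.eqb k b) p 0 []),
    filter_seq_pair in HP by auto.
  simpl in HP. now rewrite !Nat.sub_0_r in HP.
Qed.

Definition singleton_block (i : nat) (bl : list nat) : bool :=
  match bl with [x] => Nat.eqb x i | _ => false end.

Definition b2R (b : bool) : R := if b then 1 else 0.

(* The number of external branches while the coalescent is in state [p]. *)
Definition singletons (n : nat) (p : Defs.partition) : R :=
  lsum (map (fun i => b2R (singleton_in i p)) (seq 1 n)).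

Definition singleton_count (n : nat) (bl : list nat) : R :=
  lsum (map (fun i => b2R (singleton_block i bl)) (seq 1 n)).

Lemma singleton_block_In i bl : singleton_block i bl = true -> In i bl.
Proof.
  destruct bl as [|x [|y l]]; simpl; try discriminate.
  intros H. apply Nat.eqb_eq in H. auto.
Qed.

Lemma NoDup_app_In_l {T} (l1 l2 : list T) x : NoDup (l1 ++ l2) -> In x l1 -> ~ In x l2.
Proof.
  induction l1; simpl; intros H Hx; [contradiction|].
  inversion H; subst. destruct Hx as [<-|Hx]; auto.
  intros Hin. apply H2, in_or_app; auto.
Qed.

Lemma b2R_singleton_in i p : NoDup (concat p) ->
  b2R (singleton_in i p) = lsum (map (fun bl => b2R (singleton_block i bl)) p).
Proof.
  induction p as [|bl p IH]; simpl; intros H; auto.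
  change (b2R (singleton_block i bl || singleton_in i p) =
          b2R (singleton_block i bl) + lsum (map (fun bl => b2R (singleton_block i bl)) p)).
  destruct (singleton_block i bl) eqn:E; simpl.
  - assert (Hn : ~ In i (concat p)) by (apply (NoDup_app_In_l bl); auto using singleton_block_In).
    rewrite (lsum_map_ext _ (fun _ => 0)), lsum_map_zero; [ring|].
    intros x Hx. destruct (singleton_block i x) eqn:E2; auto.
    exfalso. apply Hn, in_concat. exists x. auto using singleton_block_In.
  - rewrite IH; [ring | eapply NoDup_app_remove_l; eauto].
Qed.

Lemma singletons_blocks n p : NoDup (concat p) -> singletons n p = lsum (map (singleton_count n) p).
Proof.
  intros H. unfold singletons, singleton_count.
  rewrite (lsum_map_ext _ (fun i => lsum (map (fun bl => b2R (singleton_block i bl)) p)))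
    by (intros; now apply b2R_singleton_in).
  apply lsum_map_swap.
Qed.

Lemma singleton_count_01 n bl : singleton_count n bl = 0 \/ singleton_count n bl = 1.
Proof.
  unfold singleton_count. destruct bl as [|x [|y l]]; simpl; try (left; apply lsum_map_zero).
  pose proof (seq_NoDup n 1) as Hnd. revert Hnd. generalize (seq 1 n) as l.
  induction l as [|y l IH]; intros Hnd; [now left|].
  inversion Hnd; subst. change (b2R (Nat.eqb x y) + lsum (map (fun i => b2R (Nat.eqb x i)) l) = 0 \/
                                b2R (Nat.eqb x y) + lsum (map (fun i => b2R (Nat.eqb x i)) l) = 1).
  destruct (Nat.eqb_spec x y) as [<-|]; simpl.
  - right. rewrite (lsum_map_ext _ (fun _ => 0)), lsum_map_zero; [ring|].
    intros z Hz. destruct (Nat.eqb_spec x z); [subst; contradiction | auto].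
  - destruct IH as [-> | ->]; auto; [left | right]; ring.
Qed.

Lemma singleton_count_sqr n bl : singleton_count n bl ^ 2 = singleton_count n bl.
Proof. destruct (singleton_count_01 n bl) as [-> | ->]; ring. Qed.

Lemma singleton_count_app n l1 l2 : l1 <> [] -> l2 <> [] -> singleton_count n (l1 ++ l2) = 0.
Proof.
  intros H1 H2. unfold singleton_count.
  destruct l1 as [|x [|y l]]; try congruence; destruct l2; try congruence; apply lsum_map_zero.
Qed.

Definition proper_partition (k : nat) (p : Defs.partition) : Prop :=
  length p = S k /\ NoDup (concat p) /\ (forall bl, In bl p -> bl <> []).

Lemma NoDup_concat_merge p a b : (a < b < length p)%nat ->
  NoDup (concat p) -> NoDup (concat (merge p a b)).
Proof.
  intros Hab Hn. pose proof (Permutation_concat _ _ (Permutation_merge p a b Hab)) as HP.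
  rewrite merge_unmerged. simpl in *. rewrite <- app_assoc.
  eapply Permutation_NoDup; eauto.
Qed.

Lemma proper_partition_merge k p ij : proper_partition (S k) p -> In ij (pairs (length p)) ->
  proper_partition k (merge p (fst ij) (snd ij)).
Proof.
  intros [Hl [Hn He]] Hij. apply In_pairs in Hij. destruct ij as [a b]; simpl in *.
  pose proof (Permutation_merge p a b Hij) as HP.
  split; [|split]; auto using NoDup_concat_merge.
  - apply Permutation_length in HP. rewrite merge_unmerged. simpl in *. lia.
  - rewrite merge_unmerged. intros bl [<- | Hin].
    + assert (nth a p [] <> []) by (apply He, nth_In; lia).
      destruct (nth a p []); simpl; congruence.
    + apply He. eapply Permutation_in; [symmetry; exact HP | simpl; auto].
Qed.

Lemma singletons_merge n p a b : NoDup (concat p) -> (forall bl, In bl p -> bl <> []) ->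
  (a < b < length p)%nat ->
  singletons n (merge p a b) = singletons n p - singleton_count n (nth a p [])
                               - singleton_count n (nth b p []).
Proof.
  intros Hn He Hab.
  pose proof (Permutation_merge p a b Hab) as HP.
  rewrite !singletons_blocks by auto using NoDup_concat_merge.
  rewrite (lsum_perm _ _ (Permutation_map (singleton_count n) HP)), merge_unmerged.
  unfold lsum; simpl. rewrite singleton_count_app by (apply He, nth_In; lia). ring.
Qed.

Lemma singleton_in_merge i p a b : (a < b < length p)%nat ->
  singleton_in i (merge p a b) = true -> singleton_in i p = true.
Proof.
  intros Hab H. apply existsb_exists in H. destruct H as [bl [Hbl Hs]].
  apply existsb_exists.
  pose proof (Permutation_merge p a b Hab) as HP.
  assert (Hin : forall bl, In bl (nth a p [] :: nth b p [] :: unmerged p a b) -> In bl p)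
    by (intros; eapply Permutation_in; [symmetry|]; eauto).
  rewrite merge_unmerged in Hbl. destruct Hbl as [<- | Hbl].
  2:{ exists bl. split; auto. apply Hin. simpl; auto. }
  destruct (nth a p []) as [|x [|y l]] eqn:Ea; simpl in Hs.
  - exists (nth b p []). split; auto. apply Hin. simpl; auto.
  - destruct (nth b p []); try discriminate.
    exists [x]. split; auto. apply Hin. rewrite <- Ea. simpl; auto.
  - discriminate.
Qed.

Lemma chain_avg_S f p hist F : chain_avg (S f) p hist F =
  lsum (map (fun ij => chain_avg f (merge p (fst ij) (snd ij)) (p :: hist) F) (pairs (length p)))
  / INR (length (pairs (length p))).
Proof. reflexivity. Qed.

Lemma chain_avg_ext_inv (Inv : nat -> Defs.partition -> list Defs.partition -> Prop)
  (F G : list Defs.partition -> R) :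
  (forall f p hist ij, Inv (S f) p hist -> In ij (pairs (length p)) ->
     Inv f (merge p (fst ij) (snd ij)) (p :: hist)) ->
  (forall p hist, Inv 0%nat p hist -> F (p :: hist) = G (p :: hist)) ->
  forall f p hist, Inv f p hist -> chain_avg f p hist F = chain_avg f p hist G.
Proof.
  intros Hstep H0. induction f; intros p hist Hi; simpl; auto.
  do 2 f_equal. apply map_ext_in. auto.
Qed.

Lemma chain_avg_ext f p hist (F G : list Defs.partition -> R) :
  (forall H, F H = G H) -> chain_avg f p hist F = chain_avg f p hist G.
Proof. intros HFG. now apply (chain_avg_ext_inv (fun _ _ _ => True)). Qed.

Lemma chain_avg_lin f : forall p hist (F G : list Defs.partition -> R) r s,
  chain_avg f p hist (fun H => r * F H + s * G H) =
  r * chain_avg f p hist F + s * chain_avg f p hist G.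
Proof.
  induction f; intros; rewrite ?chain_avg_S; auto.
  rewrite (map_ext _ (fun ij => r * chain_avg f (merge p (fst ij) (snd ij)) (p :: hist) F
                              + s * chain_avg f (merge p (fst ij) (snd ij)) (p :: hist) G))
    by (intros; apply IHf).
  rewrite lsum_map_lin. unfold Rdiv. ring.
Qed.

Lemma chain_avg_scal f p hist (F : list Defs.partition -> R) r :
  chain_avg f p hist (fun H => r * F H) = r * chain_avg f p hist F.
Proof.
  rewrite (chain_avg_ext _ _ _ _ (fun H => r * F H + 0 * F H)) by (intros; ring).
  rewrite chain_avg_lin. ring.
Qed.

Lemma chain_avg_add f p hist (F G : list Defs.partition -> R) :
  chain_avg f p hist (fun H => F H + G H) = chain_avg f p hist F + chain_avg f p hist G.
Proof.
  rewrite (chain_avg_ext _ _ _ _ (fun H => 1 * F H + 1 * G H)) by (intros; ring).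
  rewrite chain_avg_lin. ring.
Qed.

Lemma chain_avg_rsum f p hist (F : nat -> list Defs.partition -> R) d :
  chain_avg f p hist (fun H => rsum (fun i => F i H) d)
  = rsum (fun i => chain_avg f p hist (F i)) d.
Proof.
  induction d; simpl.
  - rewrite (chain_avg_ext _ _ _ _ (fun H => 0 * F 0%nat H)) by (intros; ring).
    rewrite chain_avg_scal. ring.
  - now rewrite chain_avg_add, IHd.
Qed.

Lemma chain_avg_quad_form f p hist d c b A xs :
  chain_avg f p hist (fun H => quad_form d (c H) (b H) (A H) xs) =
  quad_form d (chain_avg f p hist c) (fun i => chain_avg f p hist (fun H => b H i))
    (fun i j => chain_avg f p hist (fun H => A H i j)) xs.
Proof.
  unfold quad_form. rewrite !chain_avg_add, !chain_avg_rsum. f_equal; [f_equal|].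
  - apply rsum_ext. intros i _. rewrite Rmult_comm, <- chain_avg_scal.
    apply chain_avg_ext. intros; ring.
  - apply rsum_ext. intros i _. rewrite chain_avg_rsum. apply rsum_ext. intros j _.
    rewrite (Rmult_assoc _ (nth i xs 0)), Rmult_comm, <- chain_avg_scal.
    apply chain_avg_ext. intros; ring.
Qed.

Lemma chain_avg_quad_form_mean f p hist d c b A :
  chain_avg f p hist (fun H => quad_form_mean d (c H) (b H) (A H)) =
  quad_form_mean d (chain_avg f p hist c) (fun i => chain_avg f p hist (fun H => b H i))
    (fun i j => chain_avg f p hist (fun H => A H i j)).
Proof.
  unfold quad_form_mean. rewrite !chain_avg_add, !chain_avg_rsum.
  do 2 f_equal. apply rsum_ext. intros; apply chain_avg_rsum.
Qed.

Lemma exp_expect_chain_avg_quad_form f p hist d c b A (g : list R -> R) :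
  (forall xs, length xs = d -> Forall (Rle 0) xs ->
     g xs = chain_avg f p hist (fun H => quad_form d (c H) (b H) (A H) xs)) ->
  exp_expect d g (chain_avg f p hist (fun H => quad_form_mean d (c H) (b H) (A H))).
Proof.
  intros Hg. rewrite chain_avg_quad_form_mean. apply exp_expect_quad_form.
  intros xs Hl Hx. rewrite Hg by auto. apply chain_avg_quad_form.
Qed.

(** * Moments of the singleton counts along the chain *)

Section Moments.
Variables n m : nat.

(* [E (T_{k-1} - T_k) = 2 / (k (k-1))], restricted to the levels [k > m] seen by [Lhat]. *)
Definition level_weight (k : nat) : R := if Nat.ltb m k then 2 / (INR k * (INR k - 1)) else 0.

Definition weighted_singletons (H : list Defs.partition) : R :=
  lsum (map (fun q => level_weight (length q) * singletons n q) H).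

Definition weighted_singletons_sqr (H : list Defs.partition) : R :=
  lsum (map (fun q => (level_weight (length q) * singletons n q) ^ 2) H).

(* Started from a state with [k] blocks and [Y] singletons, the chain averages
   [weighted_singletons] of the levels [<= k] to [coef_alpha k * Y], and
   [weighted_singletons^2 + weighted_singletons_sqr] to [coef_beta k * Y^2 + coef_gamma k * Y]. *)
Fixpoint coef_alpha k := match k with
  | O => 0
  | S k' => level_weight k + coef_alpha k' * ((INR k - 2) / INR k) end.

Fixpoint coef_beta k := match k with
  | O => 0
  | S k' => 2 * level_weight k ^ 2 + 2 * level_weight k * coef_alpha k' * ((INR k - 2) / INR k)
            + coef_beta k' * ((INR k - 2) * (INR k - 3) / (INR k * (INR k - 1))) end.

Fixpoint coef_gamma k := match k with
  | O => 0
  | S k' => coef_beta k' * (2 * (INR k - 2) / (INR k * (INR k - 1)))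
            + coef_gamma k' * ((INR k - 2) / INR k) end.

Lemma coef_alpha_S k :
  coef_alpha (S k) = level_weight (S k) + coef_alpha k * ((INR (S k) - 2) / INR (S k)).
Proof. reflexivity. Qed.

Lemma coef_beta_S k :
  coef_beta (S k) =
  2 * level_weight (S k) ^ 2 + 2 * level_weight (S k) * coef_alpha k * ((INR (S k) - 2) / INR (S k))
  + coef_beta k * ((INR (S k) - 2) * (INR (S k) - 3) / (INR (S k) * (INR (S k) - 1))).
Proof. reflexivity. Qed.

Lemma coef_gamma_S k :
  coef_gamma (S k) = coef_beta k * (2 * (INR (S k) - 2) / (INR (S k) * (INR (S k) - 1)))
                     + coef_gamma k * ((INR (S k) - 2) / INR (S k)).
Proof. reflexivity. Qed.

Lemma weighted_singletons_cons q H :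
  weighted_singletons (q :: H) = level_weight (length q) * singletons n q + weighted_singletons H.
Proof. reflexivity. Qed.

Lemma weighted_singletons_sqr_cons q H :
  weighted_singletons_sqr (q :: H) =
  (level_weight (length q) * singletons n q) ^ 2 + weighted_singletons_sqr H.
Proof. reflexivity. Qed.

Lemma singletons_nth p : NoDup (concat p) ->
  singletons n p = rsum (fun a => singleton_count n (nth a p [])) (length p).
Proof. intros Hn. now rewrite singletons_blocks, (lsum_map_nth _ _ []). Qed.

Lemma mean_singletons_merge f p : proper_partition (S f) p ->
  lsum (map (fun ij => singletons n (merge p (fst ij) (snd ij))) (pairs (length p))) =
  INR (length (pairs (length p))) * ((INR (length p) - 2) / INR (length p) * singletons n p).
Proof.
  intros [Hl [Hn He]].
  set (u := fun a => singleton_count n (nth a p [])).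
  assert (Hy : singletons n p = rsum u (length p)) by now apply singletons_nth.
  rewrite (lsum_map_ext _ (fun ij => singletons n p * 1 + (-1) * (u (fst ij) + u (snd ij)))).
  2:{ intros ij Hij. apply In_pairs in Hij. rewrite singletons_merge by auto. unfold u. ring. }
  rewrite lsum_map_lin, lsum_map_const, lsum_pairs. simpl fst; simpl snd.
  rewrite rsum_pairs_add, <- Hy, length_pairs, Hl.
  assert (INR (S (S f)) <> 0) by (apply not_0_INR; lia).
  field; auto.
Qed.

Lemma mean_singletons_sqr_merge f p : proper_partition (S f) p ->
  lsum (map (fun ij => singletons n (merge p (fst ij) (snd ij)) ^ 2) (pairs (length p))) =
  INR (length (pairs (length p))) *
    ((INR (length p) - 2) * (INR (length p) - 3) / (INR (length p) * (INR (length p) - 1))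
       * singletons n p ^ 2
     + 2 * (INR (length p) - 2) / (INR (length p) * (INR (length p) - 1)) * singletons n p).
Proof.
  intros [Hl [Hn He]].
  set (u := fun a => singleton_count n (nth a p [])).
  assert (Hy : singletons n p = rsum u (length p)) by now apply singletons_nth.
  assert (Hu2 : rsum (fun a => u a ^ 2) (length p) = singletons n p).
  { rewrite Hy. apply rsum_ext. intros; apply singleton_count_sqr. }
  rewrite (lsum_map_ext _ (fun ij => 1 * (singletons n p ^ 2 * 1
                                          + (-2 * singletons n p) * (u (fst ij) + u (snd ij)))
                                     + 1 * (u (fst ij) + u (snd ij)) ^ 2)).
  2:{ intros ij Hij. apply In_pairs in Hij. rewrite singletons_merge by auto. unfold u. ring. }
  rewrite !lsum_map_lin, lsum_map_const, !lsum_pairs. simpl fst; simpl snd.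
  rewrite rsum_pairs_add, rsum_pairs_add_sqr, Hu2, <- Hy, length_pairs, Hl.
  assert (INR (S (S f)) <> 0) by (apply not_0_INR; lia).
  assert (INR (S (S f)) - 1 <> 0) by (rewrite !S_INR; pose proof (pos_INR f); lra).
  field; auto.
Qed.

Lemma length_pairs_neq0 f p : proper_partition (S f) p -> INR (length (pairs (length p))) <> 0.
Proof.
  intros [Hl _]. rewrite length_pairs, Hl, !S_INR. pose proof (pos_INR f).
  apply Rgt_not_eq, Rmult_gt_0_compat; nra.
Qed.

Lemma chain_avg_weighted_singletons f : forall p hist X, proper_partition f p ->
  chain_avg f p hist (fun H => weighted_singletons H + X) =
  weighted_singletons hist + X + coef_alpha (S f) * singletons n p.
Proof.
  induction f; intros p hist X Hp.
  { destruct Hp as [Hl _]. simpl. rewrite weighted_singletons_cons, Hl. simpl. ring. }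
  rewrite chain_avg_S.
  rewrite (lsum_map_ext _ (fun ij => (weighted_singletons (p :: hist) + X) * 1
                                     + coef_alpha (S f) * singletons n (merge p (fst ij) (snd ij))))
    by (intros; rewrite IHf by (now apply proper_partition_merge); ring).
  rewrite lsum_map_lin, lsum_map_const, (mean_singletons_merge f p Hp).
  pose proof (length_pairs_neq0 f p Hp) as HL.
  destruct Hp as [Hl _]. rewrite Hl in *.
  rewrite weighted_singletons_cons, Hl, (coef_alpha_S (S f)).
  assert (INR (S (S f)) <> 0) by (apply not_0_INR; lia).
  field; auto.
Qed.

Lemma chain_avg_weighted_singletons_sqr f : forall p hist X, proper_partition f p ->
  chain_avg f p hist (fun H => (weighted_singletons H + X) ^ 2 + weighted_singletons_sqr H) =
  (weighted_singletons hist + X) ^ 2 + weighted_singletons_sqr hist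
  + 2 * (weighted_singletons hist + X) * coef_alpha (S f) * singletons n p
  + coef_beta (S f) * singletons n p ^ 2 + coef_gamma (S f) * singletons n p.
Proof.
  induction f; intros p hist X Hp.
  { destruct Hp as [Hl _]. simpl.
    rewrite weighted_singletons_cons, weighted_singletons_sqr_cons, Hl. simpl. ring. }
  rewrite chain_avg_S.
  set (Z := weighted_singletons (p :: hist) + X).
  rewrite (lsum_map_ext _ (fun ij => (Z ^ 2 + weighted_singletons_sqr (p :: hist)) * 1 +
         1 * ((2 * Z * coef_alpha (S f) + coef_gamma (S f))
                * singletons n (merge p (fst ij) (snd ij))
              + coef_beta (S f) * singletons n (merge p (fst ij) (snd ij)) ^ 2)))
    by (intros; rewrite IHf by (now apply proper_partition_merge); unfold Z; ring).
  rewrite (lsum_map_lin (fun _ => 1) _ (Z ^ 2 + weighted_singletons_sqr (p :: hist)) 1).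
  rewrite lsum_map_lin, lsum_map_const, (mean_singletons_merge f p Hp),
    (mean_singletons_sqr_merge f p Hp).
  pose proof (length_pairs_neq0 f p Hp) as HL.
  destruct Hp as [Hl _]. rewrite Hl in *.
  unfold Z. rewrite weighted_singletons_cons, weighted_singletons_sqr_cons, Hl,
    (coef_alpha_S (S f)), (coef_beta_S (S f)), (coef_gamma_S (S f)).
  assert (INR (S (S f)) <> 0) by (apply not_0_INR; lia).
  assert (INR (S (S f)) - 1 <> 0) by (rewrite !S_INR; pose proof (pos_INR f); lra).
  field; auto.
Qed.

End Moments.

Lemma harm_S k : harm (S k) = harm k + / INR (S k).
Proof. reflexivity. Qed.

Lemma harm_pred k : (1 <= k)%nat -> harm k = harm (k - 1) + / INR k.
Proof. intros Hk. destruct k as [|k]; [lia|]. now rewrite harm_S, Nat.sub_succ, Nat.sub_0_r. Qed.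

Section ClosedForms.
Variable m : nat.
Hypothesis m_pos : (1 <= m)%nat.

Lemma coefs_below k : (k <= m)%nat ->
  coef_alpha m k = 0 /\ coef_beta m k = 0 /\ coef_gamma m k = 0.
Proof.
  induction k; intros Hk; simpl; [auto|].
  destruct IHk as [-> [-> ->]]; [lia|].
  unfold level_weight. replace (Nat.ltb m (S k)) with false by (symmetry; apply Nat.ltb_ge; lia).
  repeat split; ring.
Qed.

Definition beta_numerator k : R :=
  (INR k - INR m) * (INR k + INR m + 1) / 2 - (INR m + 2) * (INR k - INR m)
  + 2 * INR m * (harm k - harm m).

Definition beta_gamma_numerator k : R :=
  (1 - INR m) * (harm (k - 1) - harm (m - 1)) + INR m * (harm k - harm m).

Lemma coef_closed_forms d : let k := (m + d)%nat in
  coef_alpha m k * INR k * (INR k - 1) = 2 * (INR k - INR m) /\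
  coef_beta m k * INR k * (INR k - 1) ^ 2 * (INR k - 2) = 8 * beta_numerator k /\
  (coef_beta m k + coef_gamma m k) * INR k * (INR k - 1) = 8 * beta_gamma_numerator k.
Proof.
  induction d; intros k; unfold k in *.
  { rewrite Nat.add_0_r. destruct (coefs_below m (le_n m)) as [-> [-> ->]].
    unfold beta_numerator, beta_gamma_numerator. split; [ring | split; field]. }
  destruct IHd as [HA [HB HG]].
  replace (m + S d)%nat with (S (m + d)) by lia.
  assert (Hj : (1 <= m + d)%nat) by lia.
  assert (Hjm : (m < S (m + d))%nat) by lia.
  revert HA HB HG Hj Hjm. generalize (m + d)%nat. intros j HA HB HG Hj Hjm.
  assert (Hj0 : INR j <> 0) by (apply not_0_INR; lia).
  assert (Hj1 : INR j + 1 <> 0) by (pose proof (pos_INR j); lra).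
  assert (Hj2 : INR j + 1 - 1 <> 0) by lra.
  assert (Hw : level_weight m (S j) = 2 / ((INR j + 1) * INR j)).
  { unfold level_weight. replace (Nat.ltb m (S j)) with true by (symmetry; apply Nat.ltb_lt; lia).
    rewrite S_INR. f_equal. ring. }
  assert (HA' : coef_alpha m (S j) * INR (S j) * (INR (S j) - 1)
                = 2 + coef_alpha m j * INR j * (INR j - 1)).
  { rewrite coef_alpha_S, Hw, S_INR. field; auto. }
  assert (HB' : coef_beta m (S j) * INR (S j) * (INR (S j) - 1) ^ 2 * (INR (S j) - 2)
                = coef_beta m j * INR j * (INR j - 1) ^ 2 * (INR j - 2)
                  + 8 * (INR j - 1) / (INR j + 1)
                  + 4 * (coef_alpha m j * INR j * (INR j - 1)) * (INR j - 1) / (INR j + 1)).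
  { rewrite coef_beta_S, Hw, S_INR. field; auto. }
  assert (HG' : (coef_beta m (S j) + coef_gamma m (S j)) * INR (S j) * (INR (S j) - 1)
                = (coef_beta m j + coef_gamma m j) * INR j * (INR j - 1)
                  + 8 / (INR j * (INR j + 1))
                  + 4 * (coef_alpha m j * INR j * (INR j - 1)) / (INR j * (INR j + 1))).
  { rewrite coef_beta_S, coef_gamma_S, Hw, S_INR. field; auto. }
  rewrite HA', HB', HG', HA, HB, HG.
  unfold beta_numerator, beta_gamma_numerator.
  replace (S j - 1)%nat with j by lia.
  rewrite harm_S, S_INR, (harm_pred j) by lia.
  split; [ring | split; field; auto].
Qed.

End ClosedForms.

(** * The external lengths as linear forms in the exponential variables *)

Lemma nfloor_INR k : nfloor (INR k) = k.
Proof.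
  unfold nfloor. rewrite <- (tech_up (INR k) (Z.of_nat k + 1)).
  - now rewrite Z.add_simpl_r, Nat2Z.id.
  - rewrite plus_IZR, <- INR_IZR_INZ. simpl. lra.
  - rewrite plus_IZR, <- INR_IZR_INZ. simpl. lra.
Qed.

Lemma nfloor_bounds x k : 1 <= x -> x <= INR k -> (1 <= nfloor x <= k)%nat.
Proof.
  intros H1 H2. unfold nfloor. destruct (archimed x) as [Ha Hb].
  assert (Hu1 : (1 < up x)%Z) by (apply lt_IZR; simpl; lra).
  assert (Hu2 : (up x <= Z.of_nat k + 1)%Z)
    by (apply le_IZR; rewrite plus_IZR, <- INR_IZR_INZ; simpl; lra).
  lia.
Qed.

Lemma Rpower_INR_bounds (k : nat) a : (1 <= k)%nat -> 0 <= a <= 1 -> 1 <= Rpower (INR k) a <= INR k.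
Proof.
  intros Hk Ha. assert (H1 : 1 <= INR k) by (apply (le_INR 1); auto).
  split.
  - rewrite <- (Rpower_O (INR k)) by lra. apply Rle_Rpower; lra.
  - rewrite <- (Rpower_1 (INR k)) at 2 by lra. apply Rle_Rpower; lra.
Qed.

Lemma fold_last_false_ge (P : nat -> bool) len : forall s a, (a <= s)%nat ->
  (a <= fold_left (fun acc k => if P k then acc else k) (seq s len) a)%nat.
Proof.
  induction len; intros s a H; simpl; [lia|].
  destruct (P s); [apply IHlen; lia|].
  specialize (IHlen (S s) s ltac:(lia)). lia.
Qed.

Lemma fold_last_false_lt_iff (P : nat -> bool) j len : forall s a, (a <= s)%nat -> (a < j)%nat ->
  ((fold_left (fun acc k => if P k then acc else k) (seq s len) a < j)%nat <->
   (forall k, (s <= k < s + len)%nat -> (j <= k)%nat -> P k = true)).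
Proof.
  induction len; intros s a H Hj; simpl; [split; intros; [lia | auto]|].
  destruct (P s) eqn:E.
  - rewrite IHlen by lia. split; intros HH k Hk1 Hk2.
    + destruct (Nat.eq_dec k s); [subst; auto | apply HH; lia].
    + apply HH; lia.
  - destruct (Nat.lt_ge_cases s j).
    + rewrite IHlen by lia. split; intros HH k Hk1 Hk2.
      * destruct (Nat.eq_dec k s); [subst; lia | apply HH; lia].
      * apply HH; lia.
    + split; intros HH.
      * pose proof (fold_last_false_ge P len (S s) s ltac:(lia)). lia.
      * specialize (HH s ltac:(lia) ltac:(lia)). congruence.
Qed.

Section History.
Variable n : nat.

(* [H = [pi_1; ...; pi_n]] (so [pi_k = nth (k - 1) H []]): [pi_k] has [k] blocks and
   singletons persist from [pi_k] to [pi_(k+1)]. *)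
Definition coalescent_history (H : list Defs.partition) : Prop :=
  length H = n /\ (forall t, (t < n)%nat -> length (nth t H []) = S t) /\
  (forall t x, (S t < n)%nat -> singleton_in x (nth t H []) = true ->
     singleton_in x (nth (S t) H []) = true).

Lemma rho_ltb H i j : coalescent_history H -> (1 <= j <= n)%nat ->
  Nat.ltb (rho n H i) j = singleton_in i (nth (j - 1) H []).
Proof.
  intros [Hl [Hlen Hmono]] Hj. unfold rho.
  set (P := fun k => singleton_in i (nth (k - 1) H [])).
  change (singleton_in i (nth (j - 1) H [])) with (P j).
  change (fun acc k => if singleton_in i (nth (k - 1) H []) then acc else k) with
         (fun acc k => if P k then acc else k).
  pose proof (fold_last_false_lt_iff P j n 1 0 ltac:(lia) ltac:(lia)) as HF.
  destruct (P j) eqn:E.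
  - apply Nat.ltb_lt, HF. intros k Hk1 Hk2.
    replace k with (j + (k - j))%nat by lia.
    assert (Hd : (j + (k - j) <= n)%nat) by lia. revert Hd.
    induction (k - j)%nat as [|d IH]; intros Hd; [now rewrite Nat.add_0_r|].
    unfold P in *. replace (j + S d - 1)%nat with (S (j + d - 1)) by lia.
    apply Hmono; [lia | apply IH; lia].
  - apply Nat.ltb_ge. apply Nat.nlt_ge. intros Hlt.
    rewrite (proj1 HF Hlt j ltac:(lia) ltac:(lia)) in E. discriminate.
Qed.

(* [T_(j-1) - T_j]; for [j = 1] Rocq's [x / 0 = 0] makes it vanish. *)
Definition level_length (es : list R) (j : nat) : R := nth (j - 2) es 0 / (INR j * INR (j - 1) / 2).

Lemma level_length_1 es : level_length es 1 = 0.
Proof.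
  unfold level_length. simpl. replace (1 * 0 / 2) with 0 by field.
  unfold Rdiv. now rewrite Rinv_0, Rmult_0_r.
Qed.

Lemma level_length_nonneg es j : Forall (Rle 0) es -> 0 <= level_length es j.
Proof.
  intros Hes. unfold level_length.
  assert (0 <= nth (j - 2) es 0) by (destruct (le_lt_dec (length es) (j - 2));
    [rewrite nth_overflow by lia; lra | eapply Forall_forall; eauto using nth_In]).
  set (c := INR j * INR (j - 1) / 2).
  assert (0 <= c) by (pose proof (pos_INR j); pose proof (pos_INR (j - 1)); unfold c; nra).
  apply Rmult_le_pos; auto.
  destruct (Req_dec c 0) as [->|]; [rewrite Rinv_0; lra | apply Rlt_le, Rinv_0_lt_compat; lra].
Qed.

Lemma T_levels es k :
  T n es k = lsum (map (fun j => b2R (Nat.ltb k j) * level_length es j) (seq 1 n)).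
Proof.
  change (T n es k) with (lsum (map (level_length es) (seq (k + 1) (n - k)))).
  assert (Hlow : forall s len, (s + len <= S k)%nat ->
            lsum (map (fun j => b2R (Nat.ltb k j) * level_length es j) (seq s len)) = 0).
  { intros s len Hsl. rewrite (lsum_map_ext _ (fun _ => 0)) by
      (intros j Hj; apply in_seq in Hj; replace (Nat.ltb k j) with false
         by (symmetry; apply Nat.ltb_ge; lia); simpl; ring).
    apply lsum_map_zero. }
  destruct (Nat.le_gt_cases n k).
  - replace (n - k)%nat with 0%nat by lia. symmetry. apply Hlow. lia.
  - replace n with (k + (n - k))%nat at 2 by lia.
    rewrite seq_app, map_app, lsum_app, Hlow, Rplus_0_l by lia.
    replace (1 + k)%nat with (k + 1)%nat by lia.
    apply lsum_map_ext. intros j Hj. apply in_seq in Hj.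
    replace (Nat.ltb k j) with true by (symmetry; apply Nat.ltb_lt; lia). simpl. ring.
Qed.

Lemma T_le es k k' : Forall (Rle 0) es -> (k <= k')%nat -> T n es k' <= T n es k.
Proof.
  intros Hes Hk. rewrite !T_levels. apply lsum_map_le. intros j _.
  apply Rmult_le_compat_r; [now apply level_length_nonneg|].
  destruct (Nat.ltb_spec k' j); destruct (Nat.ltb_spec k j); simpl; lra || lia.
Qed.

Lemma T_nonneg es k : Forall (Rle 0) es -> 0 <= T n es k.
Proof.
  intros Hes. rewrite T_levels. apply lsum_map_nonneg. intros j _.
  apply Rmult_le_pos; [destruct (Nat.ltb k j); simpl; lra | now apply level_length_nonneg].
Qed.

Lemma T_n es : T n es n = 0.
Proof. unfold T. now rewrite Nat.sub_diag. Qed.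

Lemma Lhat_term_levels es r k : Forall (Rle 0) es ->
  Rmin (T n es r) (T n es k) - Rmin (T n es r) (T n es n) =
  lsum (map (fun j => b2R (Nat.ltb k j) * b2R (Nat.ltb r j) * level_length es j) (seq 1 n)).
Proof.
  intros Hes. rewrite T_n, (Rmin_right _ 0), Rminus_0_r by now apply T_nonneg.
  replace (Rmin (T n es r) (T n es k)) with (T n es (Nat.max r k)).
  - rewrite T_levels. apply lsum_map_ext. intros j _.
    destruct (Nat.ltb_spec (Nat.max r k) j); destruct (Nat.ltb_spec r j);
      destruct (Nat.ltb_spec k j); simpl; try ring; lia.
  - destruct (Nat.le_ge_cases r k).
    + rewrite Nat.max_r, Rmin_right by (auto; now apply T_le). reflexivity.
    + rewrite Nat.max_l, Rmin_left by (auto; now apply T_le). reflexivity.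
Qed.

Definition level_coef (m : nat) (H : list Defs.partition) (i : nat) : R :=
  level_weight m (S (S i)) * singletons n (nth (S i) H []).

(* Exchanging the sums over leaves and levels: the leaves [i] with [rho i < j] are exactly
   the singletons of [pi_j]. *)
Lemma lsum_leaves_levels H es k : coalescent_history H -> (1 <= n)%nat ->
  lsum (map (fun i => lsum (map (fun j => b2R (Nat.ltb k j) * b2R (Nat.ltb (rho n H i) j)
                                           * level_length es j) (seq 1 n))) (seq 1 n))
  = rsum (fun idx => nth idx es 0 * level_coef k H idx) (n - 1).
Proof.
  intros HV Hn. rewrite lsum_map_swap.
  rewrite (lsum_map_ext _ (fun j => (b2R (Nat.ltb k j) * level_length es j)
                                    * singletons n (nth (j - 1) H []))).
  2:{ intros j Hj. apply in_seq in Hj. unfold singletons. rewrite <- lsum_map_scal.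
      apply lsum_map_ext. intros i _. rewrite rho_ltb by (auto; lia). ring. }
  replace (seq 1 n) with (1%nat :: seq 2 (n - 1))
    by (replace n with (S (n - 1)) at 2 by lia; reflexivity).
  change (lsum (map ?f (1%nat :: ?l))) with (f 1%nat + lsum (map f l)).
  cbv beta. rewrite level_length_1, Rmult_0_r, Rmult_0_l, Rplus_0_l, lsum_map_seq.
  apply rsum_ext. intros i Hi.
  replace (2 + i - 1)%nat with (S i) by lia. replace (2 + i)%nat with (S (S i)) by lia.
  unfold level_coef, level_length, level_weight.
  replace (S (S i) - 2)%nat with i by lia. replace (S (S i) - 1)%nat with (S i) by lia.
  assert (INR (S (S i)) <> 0) by (apply not_0_INR; lia).
  assert (INR (S i) <> 0) by (apply not_0_INR; lia).
  replace (INR (S (S i)) - 1) with (INR (S i)) by (rewrite (S_INR (S i)); ring).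
  destruct (Nat.ltb k (S (S i))); simpl b2R; field; auto.
Qed.

Lemma Lhat_levels H es alpha : coalescent_history H -> Forall (Rle 0) es -> (1 <= n)%nat ->
  Lhat n alpha 1 H es =
  rsum (fun idx => nth idx es 0 * level_coef (nfloor (Rpower (INR n) alpha)) H idx) (n - 1).
Proof.
  intros HV Hes Hn. unfold Lhat.
  rewrite Rpower_1, nfloor_INR by (apply lt_0_INR; lia).
  rewrite <- lsum_leaves_levels by auto.
  apply lsum_map_ext. intros i _. now apply Lhat_term_levels.
Qed.

Lemma Lext_levels H es : coalescent_history H -> (1 <= n)%nat ->
  Lext n H es = rsum (fun idx => nth idx es 0 * level_coef 1 H idx) (n - 1).
Proof.
  intros HV Hn. unfold Lext. rewrite <- lsum_leaves_levels by auto.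
  apply lsum_map_ext. intros i _. rewrite T_levels. apply lsum_map_ext.
  intros j Hj. apply in_seq in Hj. destruct (Nat.eq_dec j 1) as [->|].
  - rewrite level_length_1. ring.
  - replace (Nat.ltb 1 j) with true by (symmetry; apply Nat.ltb_lt; lia). simpl. ring.
Qed.

End History.

Section Coalescent.
Variable n : nat.
Hypothesis n_pos : (1 <= n)%nat.

Definition chain_invariant (f : nat) (p : Defs.partition) (hist : list Defs.partition) : Prop :=
  proper_partition f p /\ (S f <= n)%nat /\ length hist = (n - S f)%nat /\
  (forall t, (t < length (p :: hist))%nat -> length (nth t (p :: hist) []) = (S f + t)%nat) /\
  (forall t x, (S t < length (p :: hist))%nat -> singleton_in x (nth t (p :: hist) []) = true ->
     singleton_in x (nth (S t) (p :: hist) []) = true).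

Lemma chain_invariant_merge f p hist ij :
  chain_invariant (S f) p hist -> In ij (pairs (length p)) ->
  chain_invariant f (merge p (fst ij) (snd ij)) (p :: hist).
Proof.
  intros [HP [Hf [Hl [Hlen Hmono]]]] Hij.
  pose proof (proper_partition_merge f p ij HP Hij) as HP'.
  pose proof (In_pairs _ _ Hij) as Hab.
  split; [exact HP' | split; [lia | split; [simpl; lia | split]]].
  - intros [|t] Ht.
    + destruct HP' as [Hl' _]. change (length (merge p (fst ij) (snd ij)) = (S f + 0)%nat). lia.
    + simpl in *. rewrite Hlen by lia. lia.
  - intros t x Ht Hs. destruct t as [|t].
    + destruct ij as [a b]. simpl in *. eapply singleton_in_merge; eauto.
    + apply Hmono; [simpl in *; lia | exact Hs].
Qed.

Lemma chain_invariant_history p hist : chain_invariant 0 p hist -> coalescent_history n (p :: hist).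
Proof.
  intros [_ [Hf [Hl [Hlen Hmono]]]].
  repeat split; [simpl; lia | intros; rewrite Hlen by (simpl; lia); lia |].
  intros t x Ht. apply Hmono. simpl; lia.
Qed.

Definition leaves : Defs.partition := map (fun i => [i]) (seq 1 n).

Lemma chain_invariant_leaves : chain_invariant (n - 1) leaves [].
Proof.
  unfold chain_invariant, proper_partition, leaves.
  rewrite length_map, length_seq.
  replace (concat (map (fun i : nat => [i]) (seq 1 n))) with (seq 1 n)
    by (induction (seq 1 n); simpl; f_equal; auto).
  split; [split; [lia | split] | split; [lia | split; [simpl; lia | split]]].
  - apply seq_NoDup.
  - intros bl Hbl. apply in_map_iff in Hbl. destruct Hbl as [x [<- _]]. discriminate.
  - intros [|t] Ht; simpl in *; [rewrite length_map, length_seq|]; lia.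
  - intros t x Ht. simpl in Ht. lia.
Qed.

Lemma singletons_leaves : singletons n leaves = INR n.
Proof.
  unfold singletons. rewrite (lsum_map_ext _ (fun _ => 1)), lsum_map_const, length_seq; [ring|].
  intros i Hi. replace (singleton_in i leaves) with true; auto.
  symmetry. apply existsb_exists. exists [i]. split.
  - now apply (in_map (fun i : nat => [i])).
  - apply Nat.eqb_refl.
Qed.

Lemma coalescent_avg_ext (F G : list Defs.partition -> R) :
  (forall H, coalescent_history n H -> F H = G H) -> coalescent_avg n F = coalescent_avg n G.
Proof.
  intros HFG. apply (chain_avg_ext_inv chain_invariant).
  - intros; now apply chain_invariant_merge.
  - intros p hist Hi. now apply HFG, chain_invariant_history.
  - apply chain_invariant_leaves.
Qed.

Variable m : nat.
Hypothesis m_pos : (1 <= m)%nat.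

Lemma weighted_singletons_history H : coalescent_history n H ->
  weighted_singletons n m H = rsum (level_coef n m H) (n - 1) /\
  weighted_singletons_sqr n m H = rsum (fun i => level_coef n m H i ^ 2) (n - 1).
Proof.
  intros [Hl [Hlen _]].
  unfold weighted_singletons, weighted_singletons_sqr.
  rewrite (lsum_map_nth _ H []), (lsum_map_nth _ H []), Hl.
  assert (Hsplit : forall F, rsum F n = F 0%nat + rsum (fun i => F (S i)) (n - 1))
    by (intros; replace n with (S (n - 1)) at 1 by lia; apply rsum_Sl).
  rewrite !Hsplit, Hlen by lia.
  assert (Hw1 : level_weight m 1 = 0)
    by (unfold level_weight; now replace (Nat.ltb m 1) with false
          by (symmetry; apply Nat.ltb_ge; lia)).
  rewrite Hw1, Rmult_0_l, pow_i, !Rplus_0_l by lia.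
  split; apply rsum_ext; intros i Hi; now rewrite Hlen by lia.
Qed.

Lemma coalescent_avg_weighted_singletons :
  coalescent_avg n (fun H => rsum (level_coef n m H) (n - 1)) = coef_alpha m n * INR n.
Proof.
  rewrite (coalescent_avg_ext _ (fun H => weighted_singletons n m H + 0))
    by (intros H HV; rewrite (proj1 (weighted_singletons_history H HV)); ring).
  unfold coalescent_avg. fold leaves.
  rewrite chain_avg_weighted_singletons by apply chain_invariant_leaves.
  rewrite singletons_leaves. replace (S (n - 1)) with n by lia.
  unfold weighted_singletons; simpl; ring.
Qed.

Lemma coalescent_avg_weighted_singletons_sqr mu :
  coalescent_avg n (fun H => (rsum (level_coef n m H) (n - 1) - mu) ^ 2
                             + rsum (fun i => level_coef n m H i ^ 2) (n - 1)) =
  mu ^ 2 - 2 * mu * coef_alpha m n * INR n + coef_beta m n * INR n ^ 2 + coef_gamma m n * INR n.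
Proof.
  rewrite (coalescent_avg_ext _ (fun H => (weighted_singletons n m H + - mu) ^ 2
                                           + weighted_singletons_sqr n m H))
    by (intros H HV; destruct (weighted_singletons_history H HV) as [-> ->]; ring).
  unfold coalescent_avg. fold leaves.
  rewrite chain_avg_weighted_singletons_sqr by apply chain_invariant_leaves.
  rewrite singletons_leaves. replace (S (n - 1)) with n by lia.
  unfold weighted_singletons, weighted_singletons_sqr; simpl; ring.
Qed.

Section Length.
Variable L : list Defs.partition -> list R -> R.
Hypothesis L_levels : forall H es, coalescent_history n H -> Forall (Rle 0) es ->
  L H es = rsum (fun i => nth i es 0 * level_coef n m H i) (n - 1).

Lemma exp_expect_length :
  exp_expect (n - 1) (fun es => coalescent_avg n (fun H => L H es)) (coef_alpha m n * INR n).
Proof.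
  rewrite <- coalescent_avg_weighted_singletons.
  erewrite coalescent_avg_ext by (intros; symmetry; apply quad_form_mean_linear).
  apply exp_expect_chain_avg_quad_form. intros xs _ Hxs.
  apply coalescent_avg_ext. intros H HV. now rewrite L_levels, quad_form_linear.
Qed.

Lemma exp_expect_length_sqr_dev mu :
  exp_expect (n - 1) (fun es => coalescent_avg n (fun H => (L H es - mu) ^ 2))
    (mu ^ 2 - 2 * mu * coef_alpha m n * INR n + coef_beta m n * INR n ^ 2 + coef_gamma m n * INR n).
Proof.
  rewrite <- coalescent_avg_weighted_singletons_sqr.
  erewrite coalescent_avg_ext by (intros; symmetry; apply quad_form_mean_sqr).
  apply exp_expect_chain_avg_quad_form. intros xs _ Hxs.
  apply coalescent_avg_ext. intros H HV. now rewrite L_levels, quad_form_sqr.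
Qed.

End Length.
End Coalescent.

Section Evaluation.
Variable n : nat.
Hypothesis n_ge3 : (3 <= n)%nat.

Let n_bounds : 3 <= INR n.
Proof. replace 3 with (INR 3) by (simpl; ring). now apply le_INR. Qed.

Lemma mean_closed_form m : (1 <= m <= n)%nat ->
  coef_alpha m n * INR n = 2 * (INR n - INR m) / (INR n - 1).
Proof.
  intros Hm. destruct (coef_closed_forms m (proj1 Hm) (n - m)) as [HA _].
  replace (m + (n - m))%nat with n in HA by lia.
  apply (Rmult_eq_reg_r (INR n - 1)); [|lra]. rewrite <- HA. field; lra.
Qed.

Lemma variance_closed_form m mu : (1 <= m <= n)%nat -> mu = 2 * (INR n - INR m) / (INR n - 1) ->
  mu ^ 2 - 2 * mu * coef_alpha m n * INR n + coef_beta m n * INR n ^ 2 + coef_gamma m n * INR n =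
  8 * (harm (n - 1) - harm (m - 1)) * (INR n + 2 * INR m - 2) / ((INR n - 1) * (INR n - 2))
  - 4 * (INR n - INR m) * (4 * INR n + INR m - 5) / ((INR n - 1) ^ 2 * (INR n - 2)).
Proof.
  intros Hm ->. destruct (coef_closed_forms m (proj1 Hm) (n - m)) as [HA [HB HG]].
  replace (m + (n - m))%nat with n in HA, HB, HG by lia.
  assert (Ea : coef_alpha m n = 2 * (INR n - INR m) / (INR n * (INR n - 1))).
  { rewrite <- HA. field; lra. }
  assert (Eb : coef_beta m n
               = 8 * beta_numerator m n / (INR n * (INR n - 1) ^ 2 * (INR n - 2))).
  { rewrite <- HB. field; repeat split; lra. }
  assert (Eg : coef_gamma m n
               = 8 * beta_gamma_numerator m n / (INR n * (INR n - 1)) - coef_beta m n).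
  { rewrite <- HG. field; lra. }
  assert (INR m <> 0) by (apply not_0_INR; lia).
  rewrite Eg, Eb, Ea. unfold beta_numerator, beta_gamma_numerator.
  rewrite (harm_pred n), (harm_pred m) by lia. field; repeat split; lra.
Qed.

Lemma total_mean_closed_form : coef_alpha 1 n * INR n = 2.
Proof. rewrite mean_closed_form by lia. simpl. field. lra. Qed.

Lemma total_variance_closed_form :
  2 ^ 2 - 2 * 2 * coef_alpha 1 n * INR n + coef_beta 1 n * INR n ^ 2 + coef_gamma 1 n * INR n =
  (8 * INR n * harm n - 16 * INR n + 8) / ((INR n - 1) * (INR n - 2)).
Proof.
  rewrite (variance_closed_form 1) by (lia || (simpl; field; lra)).
  rewrite (harm_pred n) by lia. simpl. field. lra.
Qed.

End Evaluation.

Theorem proposition5 (n : nat) (alpha : R) :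
  (3 <= n)%nat -> 0 <= alpha <= 1 ->
  let m := nfloor (Rpower (INR n) alpha) in
  let mu := 2 * (INR n - INR m) / (INR n - 1) in
  exp_expect (n - 1) (fun es => coalescent_avg n (fun H => Lhat n alpha 1 H es)) mu
  /\ exp_expect (n - 1)
       (fun es => coalescent_avg n (fun H => (Lhat n alpha 1 H es - mu) ^ 2))
       (8 * (harm (n - 1) - harm (m - 1)) * (INR n + 2 * INR m - 2)
          / ((INR n - 1) * (INR n - 2))
        - 4 * (INR n - INR m) * (4 * INR n + INR m - 5)
          / ((INR n - 1) ^ 2 * (INR n - 2)))
  /\ exp_expect (n - 1) (fun es => coalescent_avg n (fun H => Lext n H es)) 2
  /\ exp_expect (n - 1)
       (fun es => coalescent_avg n (fun H => (Lext n H es - 2) ^ 2))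
       ((8 * INR n * harm n - 16 * INR n + 8) / ((INR n - 1) * (INR n - 2))).
Proof.
  intros Hn Halpha m mu.
  assert (Hm : (1 <= m <= n)%nat)
    by (destruct (Rpower_INR_bounds n alpha ltac:(lia) Halpha); now apply nfloor_bounds).
  assert (HLhat : forall H es, coalescent_history n H -> Forall (Rle 0) es ->
            Lhat n alpha 1 H es = rsum (fun i => nth i es 0 * level_coef n m H i) (n - 1))
    by (intros; apply Lhat_levels; auto; lia).
  assert (HLext : forall H es, coalescent_history n H -> Forall (Rle 0) es ->
            Lext n H es = rsum (fun i => nth i es 0 * level_coef n 1 H i) (n - 1))
    by (intros; apply Lext_levels; auto; lia).
  split; [|split; [|split]].
  - unfold mu. rewrite <- mean_closed_form by lia. now apply exp_expect_length; try lia.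
  - rewrite <- (variance_closed_form n Hn m mu Hm eq_refl).
    now apply exp_expect_length_sqr_dev; try lia.
  - rewrite <- (total_mean_closed_form n Hn). now apply exp_expect_length; try lia.
  - rewrite <- (total_variance_closed_form n Hn). now apply exp_expect_length_sqr_dev; try lia.
Qed.
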